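(* Let $G$ be a finite group and $M$ a finitely generated (hence finite) $\mathbb{B}[G]$-module. Then $M$ is isomorphic (as a $\mathbb{B}[G]$-module) to a submodule of $\mathbb{B}[G]^n$ for some $n$.
   Context: $\mathbb{B}=\{0,1\}$ is the Boolean semifield with $1+1=1$ and $\mathbb{B}[G]$ is the group semiring. *)

From HB Require Import structures.
From mathcomp Require Import all_boot all_order all_algebra all_fingroup.
Set Implicit Arguments. Unset Strict Implicit. Unset Printing Implicit Defensive.
Import GRing.Theory.

(* An element sum_g a_g g of B[G] (a_g in B) is
   identified with its support {g | a_g = 1}, a subset of G.  Addition is
   union (coefficientwise Boolean sum), zero is the empty set, the product is
   the convolution product, i.e. the pointwise product of subsets
   A * B = {a b | a in A, b in B}, and the unit is [set 1]. *)
Definition BG (gT : finGroupType) : Type := {set gT}.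

Section BGStructure.
Variable gT : finGroupType.

HB.instance Definition _ := Choice.on (BG gT).

Definition BG_add (A B : BG gT) : BG gT := A :|: B.
Definition BG_zero : BG gT := set0.
Definition BG_mul (A B : BG gT) : BG gT := set_mulg A B.
Definition BG_one : BG gT := [set 1%g].

Fact BG_addA : associative BG_add. Proof. exact: setUA. Qed.
Fact BG_addC : commutative BG_add. Proof. exact: setUC. Qed.
Fact BG_add0 : left_id BG_zero BG_add. Proof. exact: set0U. Qed.

HB.instance Definition _ := GRing.isNmodule.Build (BG gT) BG_addA BG_addC BG_add0.

Fact BG_mulA : associative BG_mul. Proof. exact: set_mulgA. Qed.
Fact BG_mul1 : left_id BG_one BG_mul. Proof. exact: set_mul1g. Qed.
Fact BG_mulr1 : right_id BG_one BG_mul. Proof. exact: (@mulg1 {set gT}). Qed.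
Fact BG_mulDl : left_distributive BG_mul BG_add. Proof. exact: mulUg. Qed.
Fact BG_mulDr : right_distributive BG_mul BG_add. Proof. exact: mulgU. Qed.
Fact BG_mul0 : left_zero BG_zero BG_mul.
Proof.
move=> A; apply/eqP; rewrite eqEsubset sub0set andbT.
by apply/subsetP => x /mulsgP [y z]; rewrite inE.
Qed.
Fact BG_mulr0 : right_zero BG_zero BG_mul.
Proof.
move=> A; apply/eqP; rewrite eqEsubset sub0set andbT.
by apply/subsetP => x /mulsgP [y z _]; rewrite inE.
Qed.
Fact BG_one_neq0 : BG_one != BG_zero.
Proof. by apply/set0Pn; exists 1%g; rewrite inE. Qed.

HB.instance Definition _ := GRing.Nmodule_isNzSemiRing.Build (BG gT)
  BG_mulA BG_mul1 BG_mulr1 BG_mulDl BG_mulDr BG_mul0 BG_mulr0 BG_one_neq0.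

End BGStructure.

Definition finitely_generated (gT : finGroupType) (M : lSemiModType (BG gT)) :=
  exists s : seq M, forall m : M,
    exists c : 'I_(size s) -> BG gT, m = (\sum_(i < size s) c i *: s`_i)%R.

Definition BGfree (gT : finGroupType) (n : nat) := {ffun 'I_n -> (BG gT)^o}.

(* Since 1 + 1 = 1 in B[G], a B[G]-module M is a join-semilattice under
   m <= x  iff  m + x = x.  For a fixed x, the map sending m to the set of g
   with g^-1 m not below x is B[G]-linear, and 1 lies in the image of m
   exactly when m is not below x.  Since M is finite, the tuple of these maps
   over all x in M is injective by antisymmetry of <=. *)
From HB Require Import structures.
From mathcomp Require Import all_boot all_order all_algebra all_fingroup.

Set Implicit Arguments. Unset Strict Implicit. Unset Printing Implicit Defensive.
Import GRing.Theory.

Local Open Scope ring_scope.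

Section IdempotentNmodule.
Variable V : nmodType.
Hypothesis addvv : idempotent_op (@GRing.add V).

Definition leV (a b : V) : bool := a + b == b.

Lemma leV0 (x : V) : leV 0 x.
Proof. by rewrite /leV add0r. Qed.

Lemma leVD (a b x : V) : leV (a + b) x = leV a x && leV b x.
Proof.
rewrite /leV; apply/eqP/andP => [abx | [/eqP ax /eqP bx]]; last first.
  by rewrite -addrA bx ax.
by split; apply/eqP; rewrite -abx; [|rewrite [a + b]addrC]; rewrite !addrA addvv.
Qed.

Lemma leV_sum (I : finType) (P : pred I) (F : I -> V) (x : V) :
  leV (\sum_(i | P i) F i) x = [forall (i | P i), leV (F i) x].
Proof.
rewrite (big_morph (leV^~ x) (fun a b => leVD a b x) (leV0 x)).
apply/idP/forall_inP => [all_le i Pi | all_le].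
  by move: all_le; rewrite (bigD1 i) //= => /andP[].
by apply: (big_ind (fun b : bool => b)) => // u v -> ->.
Qed.

Lemma leVV (a : V) : leV a a.
Proof. by rewrite /leV addvv. Qed.

Lemma leV_anti (a b : V) : leV a b -> leV b a -> a = b.
Proof. by move=> /eqP ab /eqP ba; rewrite -ba addrC ab. Qed.

End IdempotentNmodule.

Lemma addrr_idem (R : pzSemiRingType) (M : lSemiModType R) :
  1 + 1 = 1 :> R -> idempotent_op (@GRing.add M).
Proof. by move=> R11 m; rewrite -[m in LHS]scale1r -scalerDl R11 scale1r. Qed.

Section GroupSemiring.
Variable gT : finGroupType.

Lemma BG_add11 : 1 + 1 = 1 :> BG gT.
Proof. exact: setUid. Qed.

Lemma BG_sum_set1 (A : BG gT) : A = \sum_(a in A) ([set a] : BG gT).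
Proof.
apply/setP=> g; rewrite (_ : \sum_(a in A) _ = \bigcup_(a in A) [set a] :> BG gT) //.
apply/idP/bigcupP => [gA | [a aA /set1P ->] //].
by exists g; rewrite ?inE.
Qed.

Lemma BG_mul_set1 (x y : gT) :
  ([set x] : BG gT) * [set y] = [set (x * y)%g] :> BG gT.
Proof. exact: mulg_set1. Qed.

End GroupSemiring.

Section NleSupport.
Variables (gT : finGroupType) (M : lSemiModType (BG gT)).

Let addmm : idempotent_op (@GRing.add M) := addrr_idem (@BG_add11 gT).

Definition nle_support (x m : M) : BG gT :=
  [set g | ~~ leV (([set g^-1]%g : BG gT) *: m) x].

Lemma nle_supportD (x : M) : {morph nle_support x : a b / a + b}.
Proof.
by move=> a b; apply/setP=> g; rewrite !inE scalerDr (leVD addmm) negb_and.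
Qed.

Lemma nle_supportZ (x : M) (A : BG gT) (m : M) :
  nle_support x (A *: m) = A * nle_support x m.
Proof.
apply/setP=> g; rewrite inE {1}(BG_sum_set1 A) scaler_suml scaler_sumr.
under eq_bigr do rewrite scalerA BG_mul_set1.
rewrite (leV_sum addmm) negb_forall; apply/existsP/mulsgP => [[a]|[a b aA]].
  rewrite negb_imply => /andP[aA nle].
  by exists a (a^-1 * g)%g; rewrite ?inE ?invMg ?invgK ?mulKVg.
rewrite inE => nle ->; exists a; rewrite negb_imply aA /=.
by rewrite invMg -mulgA mulVg mulg1.
Qed.

Lemma one_in_nle_support (x m : M) : (1%g \in nle_support x m) = ~~ leV m x.
Proof. by rewrite inE invg1 -set1gE scale1r. Qed.

Lemma le_of_nle_support_eq (m m' : M) :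
  nle_support m' m = nle_support m' m' -> leV m m'.
Proof.
move/(congr1 (fun A : BG gT => 1%g \in A)).
by rewrite !one_in_nle_support (leVV addmm) => /negbFE.
Qed.

Variables (I : finType) (gen : I -> M).
Hypothesis gen_surj : forall m, exists i, m = gen i.

Definition nle_embed (m : M) : BGfree gT #|I| :=
  [ffun j => nle_support (gen (enum_val j)) m].

Fact nle_embed_semilinear : semilinear_for *:%R nle_embed.
Proof.
by split=> [A m | a b]; apply/ffunP=> j; rewrite !ffunE ?nle_supportZ ?nle_supportD.
Qed.

HB.instance Definition _ := GRing.isSemilinear.Build (BG gT) M (BGfree gT #|I|)
  *:%R nle_embed nle_embed_semilinear.

Lemma nle_embed_inj : injective nle_embed.
Proof.
have le_of_eq m m' : nle_embed m = nle_embed m' -> leV m m'.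
  have [i ->] := gen_surj m' => /(congr1 (fun f : BGfree gT #|I| => f (enum_rank i))).
  by rewrite !ffunE enum_rankK; apply: le_of_nle_support_eq.
move=> m m' eq_mm'.
by apply: leV_anti (le_of_eq _ _ eq_mm') (le_of_eq _ _ (esym eq_mm')).
Qed.

End NleSupport.

Lemma finitely_generated_surj (gT : finGroupType) (M : lSemiModType (BG gT)) :
  finitely_generated M ->
  exists (I : finType) (gen : I -> M), forall m, exists i, m = gen i.
Proof.
case=> s gen_s; exists {ffun 'I_(size s) -> BG gT}.
exists (fun c : {ffun _ -> _} => \sum_(i < size s) c i *: s`_i) => m.
by have [c ->] := gen_s m; exists (finfun c); apply: eq_bigr => i _; rewrite ffunE.
Qed.

Theorem corollary4p9 (gT : finGroupType) (M : lSemiModType (BG gT)) :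
  finitely_generated M ->
  exists (n : nat) (f : {linear M -> BGfree gT n}), injective f.
Proof.
move=> /finitely_generated_surj [I [gen gen_surj]].
by exists #|I|, (nle_embed gen); apply: nle_embed_inj.
Qed.
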